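(* Let $n\ge 3$ and let $L^B$ be a blow-up of $L\cong\mathbf{2}^n$ with atoms $q_1,\dots,q_n$. Then: (1) if $L^B\cong L\cong\mathbf{2}^n$ (all chains are single elements), then $\beta(G(L^B)_{SR})=n-2$; (2) if $|[q_i]|\ge2$ for every $1\le i\le n$, then $\beta(G(L^B)_{SR})=2n-2$; (3) if exactly $m$ of the indices $i$ satisfy $|[q_i]|=1$, then $\beta(G(L^B)_{SR})=2n-m-2$.
   Context: Blow-up: for $L\cong\mathbf{2}^n$ with atoms $q_1,\dots,q_n$, replace each $a\in L\setminus\{0,1\}$ by a finite chain $C_a$: $a=a^1\lessdot\cdots\lessdot a^{k_a}$ ($k_a\ge1$), keep $0,1$; elements of one chain are ordered along it, and for $u\in C_a,v\in C_b$ with $a\ne b$ ($C_0=\{0\},C_1=\{1\}$), $u\le v$ iff $a<b$ in $L$. $G(L^B)$ is the zero-divisor graph of $L^B$ (vertices: nonzero elements with a nonzero element meeting them in $0$; adjacency: meet $=0$). $[x]=\{y:y^\perp=x^\perp\}$ with $x^\perp=\{z:x\wedge z=0\}$; so $[q_i]=C_{q_i}$. In a graph $G$, $u$ is maximally distant from $v$ if $d(v,w)\le d(u,v)$ for all neighbours $w$ of $u$; $u,v$ are mutually maximally distant if each is maximally distant from the other; the strong resolving graph $G_{SR}$ has as vertices those $u$ which are mutually maximally distant with some vertex, with $u,v$ adjacent iff mutually maximally distant. $\beta$ denotes the independence number. *)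

From mathcomp Require Import all_boot.
Set Implicit Arguments. Unset Strict Implicit. Unset Printing Implicit Defensive.

Definition walkn (T : finType) (e : rel T) (m : nat) (u v : T) : bool :=
  [exists p : m.-tuple T, path e u p && (last u p == v)].

(* graph distance; the value #|T| encodes "infinity" (no walk), since any
   finite distance is < #|T| *)
Definition gdist (T : finType) (e : rel T) (u v : T) : nat :=
  find (fun m => walkn e m u v) (iota 0 #|T|).

Definition maxdist (T : finType) (e : rel T) (u v : T) : bool :=
  [forall w, e u w ==> (gdist e v w <= gdist e u v)].

(* mutually maximally distant = adjacency in the strong resolving graph *)
Definition mmd (T : finType) (e : rel T) (u v : T) : bool :=
  maxdist e u v && maxdist e v u.

Definition SRvert (T : finType) (e : rel T) (u : T) : bool := [exists v, mmd e u v].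

Definition SR_indep (T : finType) (e : rel T) (S : {set T}) : bool :=
  [forall u in S, SRvert e u] &&
  [forall u in S, forall v in S, (u != v) ==> ~~ mmd e u v].

Definition beta_SR (T : finType) (e : rel T) : nat :=
  \max_(S : {set T} | SR_indep e S) #|S|.

(* length of the chain C_a; C_0 = {0}, C_1 = {1}; otherwise k a (assumed >= 1) *)
Definition chainlen n (k : {set 'I_n} -> nat) (a : {set 'I_n}) : nat :=
  (if (a == set0) || (a == setT) then 0 else (k a).-1).+1.

(* element a^(j+1) of the chain C_a is encoded as Tagged a j *)
Notation LB n k := {a : {set 'I_n} & 'I_(chainlen k a)}.

Definition leB n (k : {set 'I_n} -> nat) (x y : LB n k) : bool :=
  ((tag x == tag y) && (tagged x <= tagged y)) || (tag x \proper tag y).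

Definition isBotB n (k : {set 'I_n} -> nat) (x : LB n k) : bool :=
  [forall w, leB x w].

Definition meet0 n (k : {set 'I_n} -> nat) (x y : LB n k) : bool :=
  [forall z, (leB z x && leB z y) ==> isBotB z].

Definition zdvertex n (k : {set 'I_n} -> nat) (x : LB n k) : bool :=
  ~~ isBotB x && [exists y, ~~ isBotB y && meet0 x y].

Notation ZDV n k := {x : LB n k | zdvertex x}.

Definition zd_adj n (k : {set 'I_n} -> nat) : rel (ZDV n k) :=
  fun u v => meet0 (val u) (val v).

Definition perpB n (k : {set 'I_n} -> nat) (x : LB n k) : {set LB n k} :=
  [set z | meet0 x z].
Definition clsB n (k : {set 'I_n} -> nat) (x : LB n k) : {set LB n k} :=
  [set y | perpB y == perpB x].

Definition atomB n (k : {set 'I_n} -> nat) (i : 'I_n) : LB n k :=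
  @Tagged _ [set i] (fun a => 'I_(chainlen k a)) ord0.

From mathcomp Require Import all_boot zify.
Set Implicit Arguments. Unset Strict Implicit. Unset Printing Implicit Defensive.

(* Everything about G(L^B) depends only on the L-components ("tags") of its
   vertices: two vertices are adjacent iff their tags are disjoint, and distinct
   vertices are at distance 1, 2 or 3 according as their tags are disjoint, meet
   with union below 1, or meet with union 1.  Hence u and v are mutually
   maximally distant iff u <> v and their tags are equal or overlap.  The tags of
   an independent set of G(L^B)_SR are therefore distinct and form a laminar
   family; adding the m singletons {q_i} with |[q_i]| = 1 (which cannot be tags
   of G_SR vertices) and the top element keeps it laminar, and a laminar family
   of nonempty subsets of an n-set has at most 2n - 1 members, so the set has at
   most 2n - m - 2 elements.  Equality is attained by the bottoms of the chains
   over the n - m singletons {q_i} with |[q_i]| >= 2 and over the n - 2 prefixes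
   {q_1, ..., q_j}, 2 <= j <= n - 1. *)

Section Walks.
Variables (T : finType) (e : rel T).

Lemma walkn0 u v : walkn e 0 u v = (u == v).
Proof.
apply/existsP/idP => [[p /andP[_ /eqP <-]]|/eqP <-]; first by rewrite tuple0.
by exists [tuple]; rewrite /= eqxx.
Qed.

Lemma walknS m u v : walkn e m.+1 u v = [exists w, e u w && walkn e m w v].
Proof.
apply/existsP/existsP => [[p]|[w /andP[euw /existsP[p /andP[pp lp]]]]].
  case/tupleP: p => w p /= /andP[/andP[euw pp] lp].
  by exists w; rewrite euw; apply/existsP; exists p; rewrite pp.
by exists [tuple of w :: p]; rewrite /= euw pp.
Qed.

Lemma walkn1 u v : walkn e 1 u v = e u v.
Proof.
rewrite walknS; apply/existsP/idP => [[w /andP[euw]]|euv].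
  by rewrite walkn0 => /eqP <-.
by exists v; rewrite euv walkn0 eqxx.
Qed.

Lemma gdist_eq u v d : walkn e d u v -> (forall m, m < d -> ~~ walkn e m u v) ->
  d < #|T| -> gdist e u v = d.
Proof.
move=> walk_d short ltdT; rewrite /gdist; have [r ->] : exists r, #|T| = d + r.+1.
  by exists (#|T| - d).-1; lia.
have no_short : ~~ has (fun m => walkn e m u v) (iota 0 d).
  by apply/hasPn => m; rewrite mem_iota add0n => /andP[_ /short].
by rewrite iotaD find_cat (negbTE no_short) size_iota add0n /= walk_d addn0.
Qed.

End Walks.

Section Laminar.
Variable T : finType.
Implicit Types (A B X : {set T}) (F G : {set {set T}}).

Definition overlap A B := [&& A :&: B != set0, ~~ (A \subset B) & ~~ (B \subset A)].

Definition laminar F := {in F &, forall A B, ~~ overlap A B}.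

Lemma overlapC A B : overlap A B = overlap B A.
Proof. by rewrite /overlap setIC [~~ (A \subset B) && _]andbC. Qed.

Lemma overlapNE A B : ~~ overlap A B = [|| A :&: B == set0, A \subset B | B \subset A].
Proof. by rewrite /overlap !negb_and !negbK. Qed.

Lemma overlap_neq A B : overlap A B -> A != B.
Proof. by apply: contraTneq => ->; rewrite /overlap subxx andbF. Qed.

Lemma overlap_set1 x B : ~~ overlap [set x] B.
Proof.
rewrite overlapNE sub1set; case xB: (x \in B); rewrite ?orbT ?orbF //.
apply/orP; left; apply/eqP/setP => y; rewrite !inE.
by apply/negbTE/andP => -[/eqP-> ]; rewrite xB.
Qed.

Lemma overlap_setT A : ~~ overlap A setT.
Proof. by rewrite overlapNE subsetT orbT. Qed.

Lemma laminarS F G : G \subset F -> laminar F -> laminar G.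
Proof. by move=> sGF lamF A B /(subsetP sGF) AF /(subsetP sGF); apply: lamF. Qed.

Lemma laminar_setD1 x F : laminar F -> laminar ((fun A => A :\ x) @: F).
Proof.
move=> lamF _ _ /imsetP[A AF ->] /imsetP[B BF ->]; rewrite overlapNE.
move: (lamF A B AF BF); rewrite overlapNE => /or3P[/eqP AB0 | sAB | sBA].
- by rewrite -setDIl AB0 set0D eqxx.
- by rewrite (setSD _ sAB) orbT.
- by rewrite (setSD _ sBA) !orbT.
Qed.

(* Two sets identified by deleting x are A and x |: A; two such pairs would be
   nested and then overlap, so at most one identification happens. *)
Lemma card_laminar_setD1 F x : laminar F -> set0 \notin F ->
  #|F| <= #|(fun A => A :\ x) @: F|.+1.
Proof.
move=> lamF F0; pose K := [set A in F | (x \in A) && (A :\ x \in F)].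
have leK1 : #|K| <= 1.
  apply/card_le1_eqP => A B; rewrite !inE => /and3P[AF xA AxF] /and3P[BF xB BxF].
  wlog sAB : A B AF xA AxF BF xB BxF / A \subset B.
    move=> hwlog; move: (lamF A B AF BF); rewrite overlapNE.
    case/or3P => [/eqP/setP/(_ x) | sAB | sBA]; first by rewrite !inE xA xB.
      exact: hwlog.
    exact/esym/hwlog.
  have /set0Pn[y Axy] : A :\ x != set0 by apply: contraNneq F0 => <-.
  move: (lamF A (B :\ x) AF BxF); rewrite overlapNE; case/or3P.
  - move: Axy; rewrite !inE => /andP[yx yA] /eqP/setP/(_ y).
    by rewrite !inE yx yA (subsetP sAB y yA).
  - by move/subsetP/(_ x xA); rewrite !inE eqxx.
  - move=> sBxA; apply/eqP; rewrite eqEsubset sAB andbT; apply/subsetP => z zB.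
    by have [->//|zx] := eqVneq z x; apply: (subsetP sBxA); rewrite !inE zx.
have notK A B : A \in F -> B \in F -> A \notin K -> A :\ x = B :\ x ->
    x \notin B -> x \notin A.
  move=> AF BF AnK eqAB xB; apply: contra AnK => xA.
  by rewrite !inE AF xA eqAB (setDidPl _) // disjoint_sym disjoints1.
have injFK : {in F :\: K &, injective (fun A => A :\ x)}.
  move=> A B /setDP[AF AnK] /setDP[BF BnK] eqAB.
  have xAB : (x \in A) = (x \in B).
    apply/idP/idP; apply: contraLR; first exact: notK AF BF AnK eqAB.
    exact: notK BF AF BnK (esym eqAB).
  apply/setP => y; have [->//|yx] := eqVneq y x.
  by move/setP/(_ y): eqAB; rewrite !inE yx.
rewrite -(cardsID K F) addnC -addn1 leq_add //.
  by rewrite -(card_in_imset injFK); apply/subset_leq_card/imsetS/subsetDl.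
exact: leq_trans (subset_leq_card (subsetIr _ _)) leK1.
Qed.

Lemma card_laminar X F : laminar F -> set0 \notin F -> F \subset powerset X ->
  #|F| <= (2 * #|X|).-1.
Proof.
have [N] := ubnP #|X|; elim: N X F => // N IH X F ltXN lamF F0 sFX.
have [X0|[x xX]] := set_0Vmem X.
  suff -> : F = set0 by rewrite cards0.
  apply/setP => A; rewrite inE; apply: contraNF F0 => AF.
  by have := subsetP sFX A AF; rewrite powersetE X0 subset0 => /eqP <-.
pose G := ((fun A => A :\ x) @: F) :\ set0.
have cardX : #|X| = #|X :\ x|.+1 by rewrite (cardsD1 x X) xX.
have leFG : #|F| <= #|G|.+2.
  apply: leq_trans (card_laminar_setD1 x lamF F0) _.
  by rewrite (cardsD1 set0) -/G; case: (_ \in _).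
have sGX : G \subset powerset (X :\ x).
  apply/subsetP => B; rewrite !inE => /andP[_ /imsetP[A AF ->]].
  by rewrite setSD // -powersetE (subsetP sFX).
have leG : #|G| <= (2 * #|X :\ x|).-1.
  apply: (IH _ G) sGX; first lia.
    exact: laminarS (subsetDl _ _) (laminar_setD1 lamF).
  by rewrite !inE eqxx.
have [Xx0|[y yXx]] := set_0Vmem (X :\ x); last first.
  have : 0 < #|X :\ x| by apply/card_gt0P; exists y.
  lia.
have X1 : X = [set x] by rewrite -(setD1K xX) Xx0 setU0.
rewrite X1 cards1 (leq_trans (subset_leq_card (_ : F \subset [set [set x]]))) ?cards1 //.
apply/subsetP => A AF; rewrite inE; have := subsetP sFX A AF.
rewrite powersetE X1 subset1 => /orP[//|/eqP A0].
by move: F0; rewrite -A0 AF.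
Qed.

End Laminar.

Lemma ord1_val c (i : 'I_c) : c = 1 -> val i = 0.
Proof. by move: i => [m lt_m_c] /= c1; move: lt_m_c; rewrite c1; case: m. Qed.

Section BlowUp.
Variables (n : nat) (k : {set 'I_n} -> nat).

Local Notation T := (LB n k).
Local Notation V := (ZDV n k).
Local Notation e := (@zd_adj n k).

Definition nontrivial (a : {set 'I_n}) := (a != set0) && (a != setT).

Definition chain_bot (a : {set 'I_n}) : T := @Tagged _ a (fun b => 'I_(chainlen k b)) ord0.

Lemma LB_eq (x y : T) : tag x = tag y -> tagged x = tagged y :> nat -> x = y.
Proof. by case: x => a i; case: y => b j /= E; subst b => /val_inj ->. Qed.

Lemma chainlen_set0 : chainlen k set0 = 1.
Proof. by rewrite /chainlen eqxx. Qed.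

Lemma chain1_eq (x y : T) : tag x = tag y -> chainlen k (tag x) = 1 -> x = y.
Proof.
move=> exy c1; apply: LB_eq => //.
by rewrite !ord1_val // -exy.
Qed.

Lemma leB_tag (x y : T) : leB x y -> tag x \subset tag y.
Proof. by case/orP => [/andP[/eqP xy _]|/proper_sub]; rewrite ?xy. Qed.

Lemma isBotBE (x : T) : isBotB x = (tag x == set0).
Proof.
apply/forallP/eqP => [bot_x|x0 w].
  by apply/eqP; rewrite -subset0; apply: leB_tag (bot_x (chain_bot set0)).
have [w0|w0] := eqVneq (tag w) set0; last by apply/orP; right; rewrite x0 proper0.
have -> : x = w by apply: chain1_eq; rewrite x0 ?w0 ?chainlen_set0.
by rewrite /leB eqxx leqnn.
Qed.

Lemma leB_atom i (x : T) : i \in tag x -> leB (atomB k i) x.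
Proof.
move=> ix; rewrite /leB /= leq0n andbT; apply/orP.
have [E|ne] := eqVneq [set i] (tag x); first by left; apply/eqP.
by right; rewrite properEneq ne sub1set ix.
Qed.

Lemma meet0E (x y : T) : meet0 x y = (tag x :&: tag y == set0).
Proof.
apply/forallP/idP => [meet_xy|xy0 z].
  apply/eqP/setP => i; rewrite !inE; apply/negbTE/andP => -[ix iy].
  have := meet_xy (atomB k i); rewrite !leB_atom //= isBotBE /=.
  by apply/negP/set0Pn; exists i; rewrite inE.
apply/implyP => /andP[/leB_tag zx /leB_tag zy].
by rewrite isBotBE -subset0 -(eqP xy0) subsetI zx zy.
Qed.

Lemma zdvertexE (x : T) : zdvertex x = nontrivial (tag x).
Proof.
rewrite /zdvertex /nontrivial isBotBE; apply/andP/andP => -[x0].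
  case/existsP => y /andP[]; rewrite isBotBE meet0E => y0 xy0; split => //.
  by apply: contraNneq y0 => xT; rewrite -(eqP xy0) xT setTI.
move=> xT; split => //; apply/existsP; exists (chain_bot (~: tag x)).
rewrite isBotBE meet0E setICr eqxx andbT /=.
by apply: contraNneq xT => /(congr1 (@setC _)); rewrite setCK setC0 => ->.
Qed.

Lemma nontrivialC a : nontrivial (~: a) = nontrivial a.
Proof.
have eqC b c : (~: b == c) = (b == ~: c) by apply/eqP/eqP => [<-|->]; rewrite setCK.
by rewrite /nontrivial !eqC setC0 setCT andbC.
Qed.

Definition tg (u : V) : {set 'I_n} := tag (val u).

Lemma nontrivial_tg u : nontrivial (tg u).
Proof. by rewrite -zdvertexE; apply: valP. Qed.

Lemma tg_neq0 u : tg u != set0.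
Proof. by case/andP: (nontrivial_tg u). Qed.

Lemma tg_neqT u : tg u != setT.
Proof. by case/andP: (nontrivial_tg u). Qed.

Lemma zd_adjE u v : e u v = (tg u :&: tg v == set0).
Proof. exact: meet0E. Qed.

Definition vert (x : T) (x_nt : nontrivial (tag x)) : V :=
  exist (fun x => zdvertex x) x (etrans (zdvertexE x) x_nt).

Definition vbot a (a_nt : nontrivial a) : V := @vert (chain_bot a) a_nt.

Lemma tg_vbot a (a_nt : nontrivial a) : tg (vbot a_nt) = a.
Proof. by []. Qed.

Definition vcompl (u : V) : V := vbot (etrans (nontrivialC (tg u)) (nontrivial_tg u)).

Lemma tg_vcompl u : tg (vcompl u) = ~: tg u.
Proof. by []. Qed.

Lemma adj_vcompl u : e u (vcompl u).
Proof. by rewrite zd_adjE tg_vcompl setICr. Qed.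

Lemma tg_neq_vcompl u : tg u != tg (vcompl u).
Proof.
rewrite tg_vcompl; apply: contra (tg_neq0 u) => /eqP tgC.
by rewrite -[tg u]setIid {2}tgC setICr.
Qed.

Lemma tg_inj_neq u v : tg u != tg v -> u != v.
Proof. by apply: contraNneq => ->. Qed.

Lemma perp_atomE (y : T) i : (perpB y == perpB (atomB k i)) = (tag y == [set i]).
Proof.
apply/eqP/eqP => [perp_y|y_i]; last by apply/setP => z; rewrite !inE !meet0E y_i.
apply/setP => j; rewrite inE; move/setP/(_ (atomB k j)): perp_y; rewrite !inE !meet0E /=.
have [->|ji] := eqVneq j i.
  rewrite setIid; have /negbTE-> : [set i] != set0 by apply/set0Pn; exists i; rewrite inE.
  by move/negbT/set0Pn => [z]; rewrite !inE => /andP[zy /eqP <-].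
have /eqP-> : [set i] :&: [set j] = set0.
  apply/setP => z; rewrite !inE; apply/negbTE/andP => -[/eqP-> /eqP ij].
  by rewrite ij eqxx in ji.
by move/eqP/setP/(_ j); rewrite !inE eqxx andbT => ->.
Qed.

Lemma card_clsB_atom i : #|clsB (atomB k i)| = chainlen k [set i].
Proof.
have -> : clsB (atomB k i) =
    [set @Tagged _ [set i] (fun a => 'I_(chainlen k a)) j | j : 'I_(chainlen k [set i])].
  apply/setP => y; rewrite inE perp_atomE; apply/eqP/imsetP => [|[j _ ->]] //.
  by case: y => a j /= a_i; subst a; exists j.
by rewrite card_imset ?card_ord // => j1 j2 /eqP; rewrite eq_Tagged => /eqP.
Qed.

Definition trivial_atoms : {set 'I_n} := [set i | chainlen k [set i] == 1].

Hypothesis n_ge3 : 3 <= n.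

Definition i0 : 'I_n := Ordinal (leq_trans (isT : 0 < 3) n_ge3).
Definition i1 : 'I_n := Ordinal (leq_trans (isT : 1 < 3) n_ge3).

Lemma nontrivial_set1 i : nontrivial [set i].
Proof.
apply/andP; split; first by apply/set0Pn; exists i; rewrite inE.
apply/eqP => /setP i_T; have [i_i0|ne] := eqVneq i i0.
  by move: (i_T i1); rewrite !inE i_i0.
by move: (i_T i0); rewrite !inE eq_sym (negbTE ne).
Qed.

Definition zd_dist (u v : V) : nat :=
  if u == v then 0 else if tg u :&: tg v == set0 then 1
  else if tg u :|: tg v != setT then 2 else 3.

Lemma walkn2 u v : walkn e 2 u v = (tg u :|: tg v != setT).
Proof.
rewrite walknS; apply/existsP/idP => [[w /andP[]]|uvT].
  rewrite walkn1 !zd_adjE => uw0 wv0; apply: contra (tg_neq0 w) => /eqP uvT.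
  rewrite -subset0 -setCT -uvT setCU subsetI -!disjoints_subset -!setI_eq0.
  by rewrite setIC uw0 wv0.
have nt : nontrivial (~: (tg u :|: tg v)).
  rewrite nontrivialC /nontrivial uvT andbT; apply: contra (tg_neq0 u).
  by rewrite -!subset0; apply: subset_trans (subsetUl _ _).
exists (vbot nt); rewrite walkn1 !zd_adjE tg_vbot setCU.
by rewrite setIA setICr set0I eqxx -setIA [~: tg v :&: _]setIC setICr setI0 eqxx.
Qed.

Lemma walkn3 u v : tg u :|: tg v = setT -> walkn e 3 u v.
Proof.
move=> uvT; rewrite walknS; apply/existsP; exists (vcompl u); rewrite adj_vcompl /=.
rewrite walknS; apply/existsP; exists (vcompl v).
by rewrite walkn1 !zd_adjE !tg_vcompl -setCU uvT setCT setIC setICr !eqxx.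
Qed.

Lemma card_V_gt3 : 3 < #|{: V}|.
Proof.
pose f i := vbot (nontrivial_set1 i).
have f_inj : injective f by move=> i j /(congr1 tg) /set1_inj.
have notin_f : vcompl (f i0) \notin f @: setT.
  apply/imsetP => -[j _ /(congr1 tg)]; rewrite tg_vcompl !tg_vbot => i0C.
  by have := cardsC [set i0]; rewrite i0C !cards1 card_ord; lia.
have := max_card (vcompl (f i0) |: f @: setT).
rewrite cardsU1 notin_f card_imset // cardsT card_ord => h.
by apply: leq_trans h; rewrite /= add1n ltnS.
Qed.

Lemma gdistE u v : gdist e u v = zd_dist u v.
Proof.
have ltV := card_V_gt3; rewrite /zd_dist.
have [<-|uv] := eqVneq u v.
  by apply: gdist_eq; rewrite ?walkn0 //; apply: leq_trans ltV.
case: ifP => uv0.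
  apply: gdist_eq; [by rewrite walkn1 zd_adjE | | exact: leq_trans ltV].
  by case=> // _; rewrite walkn0.
case: ifP => uvT.
  apply: gdist_eq; [by rewrite walkn2 uvT | | exact: leq_trans ltV].
  by case=> [|[|]] // _; rewrite ?walkn0 ?walkn1 ?zd_adjE ?uv0.
apply: gdist_eq => //; first by apply: walkn3; apply/eqP; move/negbFE: uvT.
by case=> [|[|[|]]] // _; rewrite ?walkn0 ?walkn1 ?walkn2 ?zd_adjE ?uv0 ?uvT.
Qed.

Lemma maxdistP u v :
  reflect (forall w, e u w -> zd_dist v w <= zd_dist u v) (maxdist e u v).
Proof.
apply: (iffP forallP) => [md_uv w euw|md_uv w].
  by move: (md_uv w); rewrite euw !gdistE.
by apply/implyP => /md_uv; rewrite !gdistE.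
Qed.

Lemma zd_dist_le3 v w : zd_dist v w <= 3.
Proof. by rewrite /zd_dist; repeat case: ifP. Qed.

Lemma zd_dist_eq3 v w :
  (zd_dist v w == 3) = [&& v != w, tg v :&: tg w != set0 & tg v :|: tg w == setT].
Proof.
rewrite /zd_dist; have [//|_] := eqVneq v w.
by case: (_ :&: _ == set0); case: (_ :|: _ == setT).
Qed.

Lemma zd_dist_le1 v w : zd_dist v w <= 1 -> v = w \/ tg v :&: tg w == set0.
Proof.
rewrite /zd_dist; have [->|_] := eqVneq v w; first by left.
by case: ifP => [vw0|_]; [right | case: ifP].
Qed.

Lemma zd_dist_meet u v : u != v -> tg u :&: tg v != set0 ->
  zd_dist u v = if tg u :|: tg v == setT then 3 else 2.
Proof. by move=> uv uv0; rewrite /zd_dist (negbTE uv) (negbTE uv0); case: (_ == setT). Qed.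

Lemma maxdist_irrefl u : ~~ maxdist e u u.
Proof.
apply/negP => /maxdistP /(_ _ (adj_vcompl u)).
by rewrite /zd_dist eqxx (negbTE (tg_inj_neq (tg_neq_vcompl u))) tg_vcompl setICr eqxx.
Qed.

Lemma maxdist_meet u v :
  u != v -> tg u :&: tg v != set0 -> ~~ (tg u \proper tg v) -> maxdist e u v.
Proof.
move=> uv uv0 nproper; apply/maxdistP => w; rewrite zd_adjE => uw0.
rewrite (zd_dist_meet uv uv0); have [_|uvT] := eqVneq (tg u :|: tg v) setT.
  exact: zd_dist_le3.
suff : zd_dist v w != 3 by have := zd_dist_le3 v w; lia.
rewrite zd_dist_eq3; apply: contra nproper => /and3P[vw vw0 /eqP vwT].
rewrite properEneq; apply/andP; split; first by apply: contra vw0 => /eqP <-.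
apply/subsetP => y yu; move/eqP/setP/(_ y): uw0; move/setP/(_ y): vwT.
by rewrite !inE yu /=; case: (y \in tg v) => //= ->.
Qed.

Lemma maxdist_disjoint u v : maxdist e u v -> u != v -> tg u :&: tg v == set0 ->
  tg v = ~: tg u /\ #|tg v| <= 1.
Proof.
move=> /maxdistP md_uv uv uv0.
have dist1 : zd_dist u v = 1 by rewrite /zd_dist (negbTE uv) uv0.
split.
  case: (zd_dist_le1 (_ : zd_dist v (vcompl u) <= 1)).
  - by rewrite -dist1; apply/md_uv/adj_vcompl.
  - by move=> ->; rewrite tg_vcompl.
  rewrite tg_vcompl => vCu0; case/negP: (tg_neq0 v); apply/eqP/setP => y.
  move/eqP/setP/(_ y): uv0; move/eqP/setP/(_ y): vCu0; rewrite !inE.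
  by case: (y \in tg u); case: (y \in tg v).
apply/card_le1_eqP => y z yv zv; pose vy := vbot (nontrivial_set1 y).
have adj_uy : e u vy.
  rewrite zd_adjE tg_vbot; apply/eqP/setP => x; move/eqP/setP/(_ x): uv0; rewrite !inE.
  by have [->|_] := eqVneq x y; rewrite ?yv ?andbF.
case: (zd_dist_le1 (_ : zd_dist v vy <= 1)); first by rewrite -dist1; apply: md_uv.
  by move=> v_vy; move: zv; rewrite v_vy tg_vbot inE => /eqP.
by rewrite tg_vbot => /eqP/setP/(_ y); rewrite !inE yv eqxx.
Qed.

Lemma maxdist_nproper u v : maxdist e u v -> ~~ (tg u \proper tg v).
Proof.
move=> /maxdistP md_uv; apply/negP => uv_proper; have sub := proper_sub uv_proper.
have uv : u != v.
  by apply: tg_inj_neq; apply: contraTneq uv_proper => ->; apply: proper_irrefl.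
have uv0 : tg u :&: tg v != set0 by rewrite (setIidPl sub) tg_neq0.
have uvT : tg u :|: tg v != setT by rewrite (setUidPr sub) tg_neqT.
have := md_uv _ (adj_vcompl u); rewrite (zd_dist_meet uv uv0) (negbTE uvT).
suff /eqP-> : zd_dist v (vcompl u) == 3 by [].
rewrite zd_dist_eq3 tg_vcompl; apply/and3P; split.
- apply: tg_inj_neq; rewrite tg_vcompl; apply: contra (tg_neq0 u) => /eqP vCu.
  by rewrite -(setIidPl sub) vCu setICr.
- by case/properP: uv_proper => _ [y yv yu]; apply/set0Pn; exists y; rewrite !inE yv.
- apply/eqP/setP => y; rewrite !inE; case yu: (y \in tg u); rewrite ?orbT ?orbF //.
  exact: subsetP sub _ yu.
Qed.

Lemma mmdE u v : mmd e u v =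
  [&& u != v, tg u :&: tg v != set0, ~~ (tg u \proper tg v) & ~~ (tg v \proper tg u)].
Proof.
apply/andP/and4P => [[md_uv md_vu]|[uv uv0 nuv nvu]]; last first.
  have vu : v != u by rewrite eq_sym.
  by split; apply: maxdist_meet; rewrite // setIC.
have uv : u != v by apply: contraNneq (maxdist_irrefl u) => uv; rewrite {2}uv.
split; rewrite ?maxdist_nproper //; apply/negP => uv0.
have [tgCu card_v] := maxdist_disjoint md_uv uv uv0.
have vu : v != u by rewrite eq_sym.
have vu0 : tg v :&: tg u == set0 by rewrite setIC.
have [_ card_u] := maxdist_disjoint md_vu vu vu0.
have := cardsC (tg u); rewrite -tgCu card_ord; lia.
Qed.

Lemma mmd_overlap u v :
  mmd e u v = (u != v) && ((tg u == tg v) || overlap (tg u) (tg v)).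
Proof.
rewrite mmdE; have [//|uv] := eqVneq u v.
have [<-|tuv] := eqVneq (tg u) (tg v); first by rewrite setIid tg_neq0 proper_irrefl.
by rewrite /overlap !properEneq tuv (eq_sym (tg v)) tuv.
Qed.

Lemma trivial_atom_vertex_eq u v i :
  i \in trivial_atoms -> tg u = [set i] -> tg v = [set i] -> u = v.
Proof.
rewrite inE => /eqP chain1 ui vi; apply/val_inj/chain1_eq; first exact: etrans ui (esym vi).
by have -> : tag (val u) = [set i] := ui.
Qed.

Lemma SRvert_set1 u i : SRvert e u -> tg u = [set i] -> i \notin trivial_atoms.
Proof.
move=> /existsP[v]; rewrite mmd_overlap => /andP[uv] + ui.
rewrite ui (negbTE (overlap_set1 _ _)) orbF => /eqP vi; apply: contra uv => i_triv.
by apply/eqP/(trivial_atom_vertex_eq i_triv ui (esym vi)).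
Qed.

Lemma SR_indep_tags S : SR_indep e S -> {in S &, injective tg} /\ laminar (tg @: S).
Proof.
case/andP => _ /forall_inP indep.
have nmmd u v : u \in S -> v \in S -> u != v -> (tg u != tg v) && ~~ overlap (tg u) (tg v).
  move=> uS vS uv; have := implyP (forall_inP (indep u uS) v vS) uv.
  by rewrite mmd_overlap uv negb_or.
split => [u v uS vS tuv|_ _ /imsetP[u uS ->] /imsetP[v vS ->]].
  by apply/eqP/contraT => uv; move: (nmmd u v uS vS uv); rewrite tuv eqxx.
have [<-|uv] := eqVneq u v; first by rewrite /overlap subxx andbF.
by case/andP: (nmmd u v uS vS uv).
Qed.

Lemma SR_indep_card S : SR_indep e S -> #|S| + #|trivial_atoms| + 2 <= 2 * n.
Proof.
move=> indS; have [tg_inj lamS] := SR_indep_tags indS.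
pose R := [set [set i] | i in trivial_atoms] :|: [set setT].
pose F := tg @: S :|: R.
have R_nolap A : A \in R -> forall B, ~~ overlap A B.
  rewrite !inE => /orP[/imsetP[i _ ->]|/eqP->] B; first exact: overlap_set1.
  by rewrite overlapC overlap_setT.
have lamF : laminar F.
  move=> A B /setUP[AS|AR]; last by rewrite R_nolap.
  by case/setUP => [BS|BR]; [apply: lamS | rewrite overlapC R_nolap].
have F0 : set0 \notin F.
  apply/negP => /setUP[/imsetP[u _ /esym/eqP]|/setUP[/imsetP[i _ /esym/eqP]|]].
  - by rewrite (negbTE (tg_neq0 u)).
  - by case/andP: (nontrivial_set1 i) => /negbTE->.
  - by move/set1P/setP/(_ i0); rewrite !inE.
have SR_R : tg @: S :&: R = set0.
  apply/setP => A; rewrite !inE; apply/negbTE/andP => -[/imsetP[u uS ->]].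
  case/orP => [/imsetP[i i_triv ui]|/eqP uT]; last by move: (tg_neqT u); rewrite uT eqxx.
  have SRu : SRvert e u by case/andP: indS => /forall_inP/(_ u uS).
  by rewrite (negbTE (SRvert_set1 SRu ui)) in i_triv.
have cardR : #|R| = #|trivial_atoms| + 1.
  rewrite cardsU cards1 card_imset; last exact: set1_inj.
  suff -> : [set [set i] | i in trivial_atoms] :&: [set setT] = set0.
    by rewrite cards0 subn0.
  apply/setP => A; rewrite !inE; apply/negbTE/andP => -[/imsetP[i _ ->] /eqP iT].
  by case/andP: (nontrivial_set1 i); rewrite iT eqxx.
have sFT : F \subset powerset setT by apply/subsetP => A _; rewrite powersetE subsetT.
have := card_laminar lamF F0 sFT.
rewrite cardsT card_ord /F cardsU SR_R cards0 subn0 (card_in_imset tg_inj) cardR; lia.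
Qed.

Lemma ltn_pred_n : n.-1 < n.
Proof. by rewrite ltn_predL (leq_trans _ n_ge3). Qed.

Definition ilast : 'I_n := Ordinal ltn_pred_n.

Definition prefix (j : nat) : {set 'I_n} := [set i : 'I_n | i <= j].

Lemma prefix_sub j l : j <= l -> prefix j \subset prefix l.
Proof. by move=> jl; apply/subsetP => i; rewrite !inE => /leq_trans; apply. Qed.

Lemma nontrivial_prefix (j : 'I_(n - 2)) : nontrivial (prefix j.+1).
Proof.
apply/andP; split; first by apply/set0Pn; exists i0; rewrite inE.
by apply/eqP => /setP/(_ ilast); rewrite !inE /=; have := ltn_ord j; lia.
Qed.

Lemma prefix_inj (j l : 'I_(n - 2)) : prefix j.+1 = prefix l.+1 -> j = l.
Proof.
have le_jl (j' l' : 'I_(n - 2)) : prefix j'.+1 = prefix l'.+1 -> j' <= l'.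
  have lt : j'.+1 < n by have := ltn_ord j'; lia.
  by move/setP/(_ (Ordinal lt)); rewrite !inE /=; lia.
by move=> jl; apply/val_inj/eqP; rewrite eqn_leq !le_jl.
Qed.

Definition witness_tags : {set {set 'I_n}} :=
  [set [set i] | i in ~: trivial_atoms] :|: [set prefix j.+1 | j : 'I_(n - 2)].

Lemma nontrivial_witness a : a \in witness_tags -> nontrivial a.
Proof.
by case/setUP => /imsetP[j _ ->]; [apply: nontrivial_set1 | apply: nontrivial_prefix].
Qed.

Lemma laminar_witness : laminar witness_tags.
Proof.
move=> A B /setUP[/imsetP[i _ ->]|/imsetP[j _ ->]]; first by rewrite overlap_set1.
case/setUP => /imsetP[l _ ->]; first by rewrite overlapC overlap_set1.
rewrite overlapNE; have [jl|/ltnW lj] := leqP j l.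
  by rewrite prefix_sub ?orbT.
by rewrite (prefix_sub (_ : l.+1 <= j.+1)) ?orbT.
Qed.

Lemma card_witness : #|witness_tags| = (n - #|trivial_atoms|) + (n - 2).
Proof.
rewrite /witness_tags cardsU.
have -> :
    [set [set i] | i in ~: trivial_atoms] :&: [set prefix j.+1 | j : 'I_(n - 2)] = set0.
  apply/setP => a; rewrite !inE; apply/negbTE/andP => -[/imsetP[i _ ->] /imsetP[j _]].
  move/setP => i_j; have := i_j i0; have := i_j i1; rewrite !inE /= => i1_i i0_i.
  by move: i1_i; rewrite -(eqP i0_i).
rewrite cards0 subn0 card_imset; last exact: set1_inj.
rewrite card_imset; last exact: prefix_inj.
by have := cardsC trivial_atoms; rewrite !card_ord; lia.
Qed.

Definition bottoms (A : {set {set 'I_n}}) : {set V} :=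
  [set u | (tg u \in A) && (tagged (val u) == 0 :> nat)].

Lemma card_bottoms (A : {set {set 'I_n}}) :
  {in A, forall a, nontrivial a} -> #|bottoms A| = #|A|.
Proof.
move=> A_nt; have tgE : tg @: bottoms A = A.
  apply/setP => a; apply/imsetP/idP => [[u]|aA]; first by rewrite inE => /andP[? _] ->.
  by exists (vbot (A_nt a aA)); rewrite ?tg_vbot // inE tg_vbot aA.
have tg_inj : {in bottoms A &, injective tg}.
  move=> u v; rewrite !inE => /andP[_ /eqP u0] /andP[_ /eqP v0] tuv.
  by apply/val_inj/LB_eq; rewrite ?u0 ?v0.
by rewrite -{2}tgE (card_in_imset tg_inj).
Qed.

Lemma SRvert_witness u : u \in bottoms witness_tags -> SRvert e u.
Proof.
rewrite inE => /andP[/setUP[/imsetP[i i_ntriv ui]|/imsetP[j _ uj]] /eqP u0]; apply/existsP.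
  have lt1 : 1 < chainlen k [set i].
    have : chainlen k [set i] != 1 by move: i_ntriv; rewrite !inE.
    by rewrite /chainlen; case: (if _ then _ else _).
  exists (@vert (@Tagged _ [set i] (fun a => 'I_(chainlen k a)) (Ordinal lt1))
                (nontrivial_set1 i)).
  rewrite mmd_overlap ui [tg _]/= eqxx andbT.
  by apply/eqP => uw; move: u0; rewrite uw.
pose b : {set 'I_n} := [set i0; ilast].
have i1_b : i1 \notin b by rewrite !inE -!val_eqE /=; lia.
have b_nt : nontrivial b.
  apply/andP; split; first by apply/set0Pn; exists i0; rewrite !inE eqxx.
  by apply: contraNneq i1_b => ->; rewrite inE.
have olap : overlap (prefix j.+1) b.
  apply/and3P; split.
  - by apply/set0Pn; exists i0; rewrite !inE eqxx.
  - by apply: contra i1_b => /subsetP; apply; rewrite inE.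
  - apply/negP => /subsetP/(_ ilast); rewrite !inE eqxx orbT /= => /(_ isT).
    by have := ltn_ord j; lia.
exists (vbot b_nt); rewrite mmd_overlap uj tg_vbot olap orbT andbT.
by apply: tg_inj_neq; rewrite uj tg_vbot overlap_neq.
Qed.

Lemma SR_indep_witness : SR_indep e (bottoms witness_tags).
Proof.
apply/andP; split; apply/forall_inP => u uW; first exact: SRvert_witness.
apply/forall_inP => v vW; apply/implyP => uv; move: uW vW.
rewrite [u \in _]inE [v \in _]inE => /andP[uW /eqP u0] /andP[vW /eqP v0].
rewrite mmd_overlap uv (negbTE (laminar_witness uW vW)) orbF /=.
by apply: contra uv => /eqP tuv; apply/eqP/val_inj/LB_eq; rewrite ?u0 ?v0.
Qed.

Lemma beta_SR_eq : beta_SR e = 2 * n - #|trivial_atoms| - 2.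
Proof.
apply/eqP; rewrite eqn_leq; apply/andP; split.
  by apply/bigmax_leqP => S /SR_indep_card; lia.
apply: leq_trans (@leq_bigmax_cond _ _ (fun S : {set V} => #|S|) _ SR_indep_witness).
rewrite card_bottoms ?card_witness; last exact: nontrivial_witness.
by have := max_card trivial_atoms; rewrite card_ord; lia.
Qed.

End BlowUp.

Theorem mainTheorem10 (n : nat) (k : {set 'I_n} -> nat)
  (hn : 3 <= n)
  (hk : forall a : {set 'I_n}, a != set0 -> a != setT -> 0 < k a) :
  ((forall a : {set 'I_n}, a != set0 -> a != setT -> k a = 1) ->
     beta_SR (@zd_adj n k) = n - 2)
  /\ ((forall i : 'I_n, 2 <= #|clsB (atomB k i)|) ->
     beta_SR (@zd_adj n k) = 2 * n - 2)
  /\ (forall m : nat, #|[set i : 'I_n | #|clsB (atomB k i)| == 1]| = m ->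
     beta_SR (@zd_adj n k) = 2 * n - m - 2).
Proof.
rewrite (beta_SR_eq k hn); split; [|split].
- move=> k1; have -> : trivial_atoms k = setT.
    apply/setP => i; rewrite !inE /chainlen.
    have /andP[i_neq0 i_neqT] := nontrivial_set1 hn i.
    by rewrite (negbTE i_neq0) (negbTE i_neqT) /= k1.
  by rewrite cardsT card_ord; lia.
- move=> cls2; have -> : trivial_atoms k = set0.
    apply/setP => i; rewrite !inE -card_clsB_atom.
    by have := cls2 i; case: (_ =P 1) => // ->.
  by rewrite cards0 subn0.
- have -> : [set i : 'I_n | #|clsB (atomB k i)| == 1] = trivial_atoms k.
    by apply/setP => i; rewrite !inE card_clsB_atom.
  by move=> m <-.
Qed.
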